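(* For every precubical set $X$, the stream realization $\vec{|X|}$ is vortex-free, i.e. every point $x\in\vec{|X|}$ has an open neighborhood $V$ for which the preorder $\leqslant_V$ is antisymmetric.
   Context: A circulation on a topological space $X$ is a function assigning to each open $V\subset X$ a preorder $\leqslant_V$ on $V$ such that for every collection $\mathcal{O}$ of open subsets, $\leqslant_{\bigcup\mathcal{O}}$ is the preorder on $\bigcup\mathcal{O}$ with smallest graph containing $\bigcup_{V\in\mathcal{O}}\mathrm{graph}(\leqslant_V)$. A stream is a space with a circulation; a stream map $f:X\to Y$ is a continuous map with $f(x)\leqslant_V f(y)$ whenever $x\leqslant_{f^{-1}V}y$, for every open $V\subset Y$. The category of streams is cocomplete, colimits being computed on underlying spaces with the final circulation. A vortex of a stream is a point $x$ such that $\leqslant_V$ fails to be antisymmetric for every open neighborhood $V$ of $x$; a stream is vortex-free if it has no vortices. Precubical sets: let $\square$ be the smallest subcategory of posets and monotone maps closed under cartesian products (unit $[0]=\{0\}$) containing $\delta_-,\delta_+:[0]\to[1]=\{0<1\}$ (sending $0$ to $0$, resp. $1$); its objects are the $[1]^n$. A precubical set is a functor $X:\square^{op}\to\mathbf{Set}$, $X_n=X([1]^n)$. Let $\vec\square[1]$ be $[0,1]$ with circulation $x\leqslant_V y$ iff $x\le y$ and $[x,y]\subset V$, and $\vec\square[n]$ its $n$-fold product in streams; $\square$-morphisms extend linearly to stream maps between these. The stream realization is the coend $\vec{|X|}=\int^{[1]^n\in\square}X_n\cdot\vec\square[n]$ in streams, with underlying space the geometric realization $|X|$. *)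

From Stdlib Require Import Reals Lra List.
Import ListNotations.
Open Scope R_scope.

Record stream := Stream {
  pt : Type;
  open : (pt -> Prop) -> Prop;
  circ : (pt -> Prop) -> pt -> pt -> Prop  (* circ V x y  means  x <=_V y *)
}.

Definition Union {T : Type} (O : (T -> Prop) -> Prop) : T -> Prop :=
  fun x => exists V, O V /\ V x.

Definition is_topology (X : stream) : Prop :=
  open X (fun _ => True) /\
  (forall O : (pt X -> Prop) -> Prop,
      (forall V, O V -> open X V) -> open X (Union O)) /\
  (forall U V, open X U -> open X V -> open X (fun x => U x /\ V x)).

Definition preorder_on {T : Type} (V : T -> Prop) (R : T -> T -> Prop) : Prop :=
  (forall x y, R x y -> V x /\ V y) /\
  (forall x, V x -> R x x) /\
  (forall x y z, R x y -> R y z -> R x z).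

Definition is_circulation (X : stream) : Prop :=
  (forall V, open X V -> preorder_on V (circ X V)) /\
  (forall O : (pt X -> Prop) -> Prop,
     (forall V, O V -> open X V) ->
     forall x y,
       circ X (Union O) x y <->
       (forall R : pt X -> pt X -> Prop,
          preorder_on (Union O) R ->
          (forall V a b, O V -> circ X V a b -> R a b) ->
          R x y)).

Definition is_stream (X : stream) : Prop := is_topology X /\ is_circulation X.

Definition stream_map (X Y : stream) (f : pt X -> pt Y) : Prop :=
  (forall V, open Y V -> open X (fun x => V (f x))) /\
  (forall V, open Y V -> forall x y,
      circ X (fun z => V (f z)) x y -> circ Y V (f x) (f y)).

Definition antisymmetric_on {T : Type} (R : T -> T -> Prop) : Prop :=
  forall a b, R a b -> R b a -> a = b.

Definition vortex (X : stream) (x : pt X) : Prop :=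
  forall V, open X V -> V x -> ~ antisymmetric_on (circ X V).

Definition vortex_free (X : stream) : Prop := forall x, ~ vortex X x.

Definition I1pt : Type := { t : R | 0 <= t <= 1 }.

Definition I1 : stream := {|
  pt := I1pt;
  open := fun U => forall x : I1pt, U x -> exists eps, eps > 0 /\
            forall y : I1pt, Rabs (proj1_sig y - proj1_sig x) < eps -> U y;
  circ := fun V x y => proj1_sig x <= proj1_sig y /\
            forall z : I1pt, proj1_sig x <= proj1_sig z <= proj1_sig y -> V z
|}.

Lemma I1_0_ok : 0 <= 0 <= 1. Proof. lra. Qed.
Lemma I1_1_ok : 0 <= 1 <= 1. Proof. lra. Qed.

Definition I1const (b : bool) : pt I1 :=
  if b then exist _ 1 I1_1_ok else exist _ 0 I1_0_ok.

(* The precubical site.  A morphism [1]^m -> [1]^n of the category    *)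
(* square (generated under cartesian products and composition by      *)
(* delta_-, delta_+ : [0] -> [1] and identities) is a product of      *)
(* n factors, each id_[1] (None) or delta_b (Some b); it is encoded   *)
(* by the word of these factors: length n, with m occurrences of None.*)

Fixpoint countId (w : list (option bool)) : nat :=
  match w with
  | [] => 0%nat
  | None :: w' => S (countId w')
  | Some _ :: w' => countId w'
  end.

(* word of g o f, for g given by w and f given by u *)
Fixpoint subst (w u : list (option bool)) : list (option bool) :=
  match w with
  | [] => []
  | None :: w' =>
      match u with
      | [] => None :: subst w' []
      | a :: u' => a :: subst w' u'
      end
  | Some b :: w' => Some b :: subst w' u
  end.

Lemma subst_length w u : length (subst w u) = length w.
Proof.
  revert u; induction w as [|[b|] w IH]; intros u; simpl; auto.
  destruct u; simpl; auto.
Qed.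

Lemma subst_ids w u : countId w = length u -> countId (subst w u) = countId u.
Proof.
  revert u; induction w as [|[b|] w IH]; intros u H; simpl in *.
  - destruct u; simpl in *; congruence.
  - apply IH; auto.
  - destruct u as [|[a|] u]; simpl in *; try discriminate.
    + apply IH; congruence.
    + f_equal; apply IH; congruence.
Qed.

Lemma repeat_ids n : countId (repeat None n) = n.
Proof. induction n; simpl; auto. Qed.

Record cmor (m n : nat) := CMor {
  cword : list (option bool);
  clen : length cword = n;
  cids : countId cword = m
}.
Arguments cword {m n}.
Arguments clen {m n}.
Arguments cids {m n}.

Definition cid (n : nat) : cmor n n :=
  CMor n n (repeat None n) (repeat_length None n) (repeat_ids n).

Lemma ccomp_ids {k m n} (f : cmor k m) (g : cmor m n) :
  countId (subst (cword g) (cword f)) = k.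
Proof.
  rewrite subst_ids. apply (cids f).
  rewrite (cids g), (clen f). reflexivity.
Qed.

Definition ccomp {k m n} (f : cmor k m) (g : cmor m n) : cmor k n :=
  CMor k n (subst (cword g) (cword f))
    (eq_trans (subst_length _ _) (clen g)) (ccomp_ids f g).

Record precubical := Precubical {
  cell : nat -> Type;
  act : forall m n, cmor m n -> cell n -> cell m;
  act_id : forall n x, act n n (cid n) x = x;
  act_comp : forall k m n (f : cmor k m) (g : cmor m n) (x : cell n),
      act k n (ccomp f g) x = act k m f (act m n g x)
}.

Definition is_cube_product (P : nat -> stream)
  (proj : forall n, nat -> pt (P n) -> pt I1) : Prop :=
  forall n,
    is_stream (P n) /\
    (forall j, (j < n)%nat -> stream_map (P n) I1 (proj n j)) /\
    (forall Z : stream, is_stream Z ->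
       forall g : nat -> pt Z -> pt I1,
         (forall j, (j < n)%nat -> stream_map Z I1 (g j)) ->
         (exists h, stream_map Z (P n) h /\
              forall j z, (j < n)%nat -> proj n j (h z) = g j z) /\
         (forall h h', stream_map Z (P n) h -> stream_map Z (P n) h' ->
              (forall j z, (j < n)%nat -> proj n j (h z) = g j z) ->
              (forall j z, (j < n)%nat -> proj n j (h' z) = g j z) ->
              forall z, h z = h' z)).

(* The linear extension of a square-morphism f : [1]^m -> [1]^n:
   coordinate j of the image is the next free coordinate (for id) or
   the constant b (for delta_b). *)
Definition linear_maps (P : nat -> stream)
  (proj : forall n, nat -> pt (P n) -> pt I1)
  (Pmap : forall m n, cmor m n -> pt (P m) -> pt (P n)) : Prop :=
  forall m n (f : cmor m n) (t : pt (P m)) j, (j < n)%nat ->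
    proj n j (Pmap m n f t) =
    match nth j (cword f) (Some false) with
    | None => proj m (countId (firstn j (cword f))) t
    | Some b => I1const b
    end.

(* S with the maps iota n x : vec-square[n] -> S (x in X_n) is the
   coend  int^{[1]^n} X_n . vec-square[n]  in the category of streams. *)
Definition is_coend (X : precubical) (P : nat -> stream)
  (Pmap : forall m n, cmor m n -> pt (P m) -> pt (P n))
  (S : stream) (iota : forall n, cell X n -> pt (P n) -> pt S) : Prop :=
  is_stream S /\
  (forall n x, stream_map (P n) S (iota n x)) /\
  (forall m n (f : cmor m n) (x : cell X n) (t : pt (P m)),
      iota n x (Pmap m n f t) = iota m (act X m n f x) t) /\
  (forall Z : stream, is_stream Z ->
     forall j : forall n, cell X n -> pt (P n) -> pt Z,
       (forall n x, stream_map (P n) Z (j n x)) ->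
       (forall m n (f : cmor m n) (x : cell X n) (t : pt (P m)),
           j n x (Pmap m n f t) = j m (act X m n f x) t) ->
       (exists u, stream_map S Z u /\
            forall n x t, u (iota n x t) = j n x t) /\
       (forall u u', stream_map S Z u -> stream_map S Z u' ->
            (forall n x t, u (iota n x t) = j n x t) ->
            (forall n x t, u' (iota n x t) = j n x t) ->
            forall s, u s = u' s)).

(* Let S be the coend of the cubes vec-square[n] along the cells of X, with
   structure maps iota.  A point x of S is iota n c t0 for some cube point t0
   (every point of a coend is in the image of the cubes).  Choose a level
   0 < θ < 1 different from every coordinate of t0, and consider on each cube
   - the open set [avoids θ] of points none of whose coordinates equals θ;
   - the height [height θ] : sum over coordinates of v - 1 if v > θ, else v.
   Both are built from coordinate sums of functions vanishing at 0 and 1, so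
   they are compatible with the face maps and descend to S: an open
   neighbourhood V of x and a real function h on S.  Inside [avoids θ] a
   directed step of a cube does not cross the level θ, so it strictly raises
   the height unless it is trivial.  Finally, the circulation of S on V is
   contained in the preorder generated by directed steps inside single cubes
   (the coend carries the final circulation), hence a <=_V b <=_V a forces
   h a = h b and then a = b. *)

From Stdlib Require Import Reals List.
From Stdlib Require Import Lra Lia Classical FunctionalExtensionality PropExtensionality ProofIrrelevance.
Open Scope R_scope.

(** * Generic facts on streams *)

Lemma pred_ext {T : Type} (U W : T -> Prop) : (forall x, U x <-> W x) -> U = W.
Proof. intro H; apply functional_extensionality; intro; apply propositional_extensionality; auto. Qed.

Lemma open_ext (X : stream) (U W : pt X -> Prop) :
  (forall x, U x <-> W x) -> open X U -> open X W.
Proof. intros H HU. rewrite <- (pred_ext U W H). exact HU. Qed.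

(* The empty set is the union of the empty family. *)
Lemma open_empty (X : stream) : is_topology X -> open X (fun _ => False).
Proof.
  intros [_ [HU _]].
  apply (open_ext X (Union (fun _ => False))).
  - intro x; unfold Union; split; [intros [V [[] _]] | tauto].
  - apply HU; intros V [].
Qed.

Lemma open_const (X : stream) (Q : Prop) : is_topology X -> open X (fun _ => Q).
Proof.
  intro HT. destruct (classic Q) as [HQ | HQ].
  - apply (open_ext X (fun _ => True)); [intros; tauto | apply (proj1 HT)].
  - apply (open_ext X (fun _ => False)); [intros; tauto | apply open_empty; auto].
Qed.

Lemma open_fin (X : stream) (HT : is_topology X) k (A : nat -> pt X -> Prop) :
  (forall j, (j < k)%nat -> open X (A j)) ->
  open X (fun x => forall j, (j < k)%nat -> A j x).
Proof.
  induction k as [|k IH]; intro H.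
  - apply (open_ext X (fun _ => True)); [intro; split; [intros _ j Hj; lia | auto] | apply (proj1 HT)].
  - apply (open_ext X (fun x => (forall j, (j < k)%nat -> A j x) /\ A k x)).
    + intro x; split.
      * intros [H1 H2] j Hj. destruct (Nat.eq_dec j k); [subst; auto | apply H1; lia].
      * intros H1; split; [intros; apply H1; lia | apply H1; lia].
    + apply (proj2 (proj2 HT)); [apply IH; intros; apply H; lia | apply H; lia].
Qed.

Lemma circ_union_incl (X : stream) (HC : is_circulation X)
  (O : (pt X -> Prop) -> Prop) (HO : forall V, O V -> open X V) V a b :
  O V -> circ X V a b -> circ X (Union O) a b.
Proof. intros HV Hab. apply (proj2 (proj2 HC O HO a b)). intros R _ HR. exact (HR V a b HV Hab). Qed.

Lemma circ_union_ind (X : stream) (HC : is_circulation X)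
  (O : (pt X -> Prop) -> Prop) (HO : forall V, O V -> open X V) (R : pt X -> pt X -> Prop) :
  (forall x, Union O x -> R x x) ->
  (forall x y z, R x y -> R y z -> R x z) ->
  (forall V a b, O V -> circ X V a b -> R a b) ->
  forall x y, circ X (Union O) x y -> R x y.
Proof.
  intros Hrefl Htrans Hsteps x y Hxy.
  cut (Union O x /\ Union O y /\ R x y); [tauto|].
  refine (proj1 (proj2 HC O HO x y) Hxy (fun a b => Union O a /\ Union O b /\ R a b) _ _).
  - split; [tauto|]. split; [intros a Ha; auto|].
    intros a b c [Ha [_ Hab]] [_ [Hc Hbc]]. split; [auto | split; [auto | eauto]].
  - intros V a b HV Hab.
    destruct (proj1 (proj1 HC V (HO V HV)) a b Hab) as [Ha Hb].
    split; [exists V; auto | split; [exists V; auto | eauto]].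
Qed.

Lemma circ_mono (X : stream) : is_stream X -> forall U W, open X U -> open X W ->
  (forall z, U z -> W z) -> forall x y, circ X U x y -> circ X W x y.
Proof.
  intros [_ HC] U W HU HW Hsub x y Hxy.
  set (O := fun V : pt X -> Prop => V = U \/ V = W).
  assert (HO : forall V, O V -> open X V) by (intros V [-> | ->]; auto).
  assert (E : Union O = W).
  { apply pred_ext; intro z; unfold Union, O; split.
    - intros [V [[-> | ->] HV]]; auto.
    - intro Hz; exists W; auto. }
  rewrite <- E. apply (circ_union_incl X HC O HO U); unfold O; auto.
Qed.

(** * The directed interval and cube products *)

Lemma I1_eq (a b : pt I1) : proj1_sig a = proj1_sig b -> a = b.
Proof.
  destruct a as [a Ha], b as [b Hb]; simpl; intro E; subst.
  f_equal; apply proof_irrelevance.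
Qed.

Lemma I1_open_full : open I1 (fun _ => True).
Proof. simpl; intros; exists 1; split; [lra | auto]. Qed.

Lemma I1_open_neq θ : open I1 (fun z : I1pt => proj1_sig z <> θ).
Proof.
  simpl. intros x Hx. exists (Rabs (proj1_sig x - θ)). split.
  - apply Rabs_pos_lt. lra.
  - intros y Hy Heq. rewrite Heq, Rabs_minus_sym in Hy. lra.
Qed.

Lemma I1_open_gt θ : open I1 (fun z : I1pt => θ < proj1_sig z).
Proof.
  simpl. intros x Hx. exists (proj1_sig x - θ). split; [lra|].
  intros y Hy. apply Rabs_def2 in Hy. lra.
Qed.

Lemma I1_open_lt θ : open I1 (fun z : I1pt => proj1_sig z < θ).
Proof.
  simpl. intros x Hx. exists (θ - proj1_sig x). split; [lra|].
  intros y Hy. apply Rabs_def2 in Hy. lra.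
Qed.

Lemma I1_const_map (X : stream) (c : pt I1) : is_stream X -> stream_map X I1 (fun _ => c).
Proof.
  intros [HT HC]. split.
  - intros W _; apply open_const; auto.
  - intros W _ x y Hxy.
    destruct (proj1 (proj1 HC _ (open_const X (W c) HT)) x y Hxy) as [Hx _].
    simpl. split; [lra|]. intros z Hz. replace z with c; auto. apply I1_eq; lra.
Qed.

Lemma const_map (X Y : stream) (c : pt Y) : is_stream X -> is_stream Y ->
  stream_map X Y (fun _ => c).
Proof.
  intros [HTX HCX] [_ [HCY _]]. split.
  - intros W _; apply open_const; auto.
  - intros W HW x y Hxy.
    destruct (proj1 (proj1 HCX _ (open_const X (W c) HTX)) x y Hxy) as [Hx _].
    apply (proj1 (proj2 (HCY W HW))); exact Hx.
Qed.

Section CubeProduct.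

Context {P : nat -> stream} {proj : forall n, nat -> pt (P n) -> pt I1}.
Hypothesis HP : is_cube_product P proj.

(* Points of a cube are determined by their coordinates (uniqueness in the
   universal property of the product, tested on constant maps). *)
Lemma cube_ext m (a b : pt (P m)) :
  (forall j, (j < m)%nat -> proj1_sig (proj m j a) = proj1_sig (proj m j b)) -> a = b.
Proof.
  intro H. destruct (HP m) as [HS [_ Hu]].
  destruct (Hu (P m) HS (fun j _ => proj m j a) (fun j _ => I1_const_map _ _ HS)) as [_ Huniq].
  apply (Huniq (fun _ => a) (fun _ => b) (const_map _ _ a HS HS) (const_map _ _ b HS HS)); auto.
  intros j z Hj; apply I1_eq; symmetry; auto.
Qed.

Lemma cube_circ_le m (V : pt (P m) -> Prop) (a b : pt (P m)) :
  open (P m) V -> circ (P m) V a b ->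
  forall j, (j < m)%nat -> proj1_sig (proj m j a) <= proj1_sig (proj m j b).
Proof.
  intros HV Hab j Hj. destruct (HP m) as [HS [Hpr _]].
  assert (Hfull : circ (P m) (fun _ => True) a b).
  { apply (circ_mono (P m) HS V); auto. apply (proj1 (proj1 HS)). }
  exact (proj1 (proj2 (Hpr j Hj) (fun _ => True) I1_open_full a b Hfull)).
Qed.

End CubeProduct.

(** * Chaotic streams *)

(* Stream maps into it are exactly the maps under
   which W0 pulls back to an open set; they serve to descend functions. *)
Definition chaotic (T : Type) (W0 : T -> Prop) : stream := {|
  pt := T;
  open := fun W => (forall z, W z) \/ (forall z, ~ W z) \/ (forall z, W z <-> W0 z);
  circ := fun W a b => W a /\ W b |}.

Lemma chaotic_stream T W0 : is_stream (chaotic T W0).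
Proof.
  split; [split; [|split]|split].
  - simpl; left; auto.
  - intros O HO. simpl.
    destruct (classic (exists V, O V /\ forall z, V z)) as [[V [HV Hf]]|Hnf].
    + left; intro z; exists V; auto.
    + destruct (classic (exists V, O V /\ forall z, V z <-> W0 z)) as [[V [HV Hf]]|Hnw].
      * right; right; intro z; split.
        -- intros [V' [HV' Hz]]. destruct (HO V' HV') as [H|[H|H]].
           ++ exfalso; apply Hnf; exists V'; auto.
           ++ exfalso; apply (H z Hz).
           ++ apply H; auto.
        -- intro Hz; exists V; split; auto; apply Hf; auto.
      * right; left; intros z [V' [HV' Hz]]. destruct (HO V' HV') as [H|[H|H]].
        -- apply Hnf; exists V'; auto.
        -- apply (H z Hz).
        -- apply Hnw; exists V'; auto.
  - intros U V HU HV; simpl in *.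
    destruct HU as [HU|[HU|HU]]; destruct HV as [HV|[HV|HV]];
      first [ left; intro z; firstorder fail
            | right; left; intro z; firstorder fail
            | right; right; intro z; firstorder fail ].
  - intros V _. split; [simpl; tauto|]. split; simpl; tauto.
  - intros O HO x y. simpl. split.
    + intros [[V1 [H1 Hx]] [V2 [H2 Hy]]] R _ HR.
      destruct (HO V1 H1) as [K1|[K1|K1]].
      * apply (HR V1); simpl; auto.
      * exfalso; apply (K1 x Hx).
      * destruct (HO V2 H2) as [K2|[K2|K2]].
        -- apply (HR V2); simpl; auto.
        -- exfalso; apply (K2 y Hy).
        -- apply (HR V1); [exact H1|]. simpl; split; [exact Hx|].
           apply (proj2 (K1 y)); apply (proj1 (K2 y)); exact Hy.
    + intro H. apply (H (fun a b => Union O a /\ Union O b)).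
      * split; [tauto|]. split; tauto.
      * intros V a b HV [Ha Hb]; split; exists V; auto.
Qed.

Lemma chaotic_map (X : stream) T W0 (f : pt X -> T) : is_stream X ->
  open X (fun x => W0 (f x)) -> stream_map X (chaotic T W0) f.
Proof.
  intros [HT HC] H0.
  assert (Hop : forall W, open (chaotic T W0) W -> open X (fun x => W (f x))).
  { intros W [HW|[HW|HW]].
    - apply (open_ext X (fun _ => True)); [intro; split; auto | apply (proj1 HT)].
    - apply (open_ext X (fun _ => False)); [intro x; split; [tauto | apply HW] | apply open_empty; auto].
    - apply (open_ext X (fun x => W0 (f x))); [intro x; apply iff_sym, HW | exact H0]. }
  split; auto.
  intros W HW x y Hxy. exact (proj1 (proj1 HC _ (Hop W HW)) x y Hxy).
Qed.

(** * The coend *)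

Section Coend.

Context {X : precubical} {P : nat -> stream} {proj : forall n, nat -> pt (P n) -> pt I1}
  {Pmap : forall m n, cmor m n -> pt (P m) -> pt (P n)}
  {S : stream} {iota : forall n, cell X n -> pt (P n) -> pt S}.
Hypothesis HP : is_cube_product P proj.
Hypothesis HC : is_coend X P Pmap S iota.

(* Every point of the coend lies in a cube: the predicate "lies in a cube"
   and the constant predicate True agree on the cubes, hence everywhere. *)
Lemma coend_surj (s : pt S) : exists n c t, iota n c t = s.
Proof.
  pose proof HC as [HS [_ [_ Hu]]].
  set (Z := chaotic Prop (fun _ => False)).
  assert (Hm : forall (Y : stream) (f : pt Y -> Prop), is_stream Y -> stream_map Y Z f)
    by (intros Y f HY; apply chaotic_map; auto; exact (open_empty _ (proj1 HY))).
  destruct (Hu Z (chaotic_stream _ _) (fun n c t => True) (fun n c => Hm _ _ (proj1 (HP n)))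
              (fun m n f x t => eq_refl)) as [_ Huniq].
  assert (Hin : forall n x t, (exists n' c' t', iota n' c' t' = iota n x t) = True)
    by (intros; apply propositional_extensionality; split; [auto | intros _; eauto]).
  rewrite <- (Huniq (fun _ => True) (fun s => exists n c t, iota n c t = s)
                (Hm _ _ HS) (Hm _ _ HS) (fun _ _ _ => eq_refl) Hin s).
  exact I.
Qed.

Lemma coend_descend (T : Type) (W0 : T -> Prop) (F : forall n, cell X n -> pt (P n) -> T) :
  (forall n c, open (P n) (fun t => W0 (F n c t))) ->
  (forall m n (f : cmor m n) (c : cell X n) (t : pt (P m)),
      F n c (Pmap m n f t) = F m (act X m n f c) t) ->
  exists u : pt S -> T, open S (fun s => W0 (u s)) /\ forall n c t, u (iota n c t) = F n c t.
Proof.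
  intros Hopen Hcomp. pose proof HC as [_ [_ [_ Hu]]].
  destruct (Hu (chaotic T W0) (chaotic_stream _ _) F) as [[u [Hum Hu_eq]] _].
  - intros n c. apply chaotic_map; [apply (proj1 (HP n)) | apply Hopen].
  - exact Hcomp.
  - exists u. split; [|exact Hu_eq].
    exact (proj1 Hum W0 (or_intror (or_intror (fun z => iff_refl _)))).
Qed.

Definition cube_step (W : pt S -> Prop) (a b : pt S) : Prop :=
  exists m (d : cell X m) (s1 s2 : pt (P m)), a = iota m d s1 /\ b = iota m d s2 /\
    circ (P m) (fun z => W (iota m d z)) s1 s2.

Definition gen_circ (W : pt S -> Prop) (p q : pt S) : Prop :=
  W p /\ W q /\ forall R : pt S -> pt S -> Prop, (forall z, W z -> R z z) ->
    (forall a b c, R a b -> R b c -> R a c) -> (forall a b, cube_step W a b -> R a b) -> R p q.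

Lemma gen_circ_preorder W : preorder_on W (gen_circ W).
Proof.
  split; [intros x y [Hx [Hy _]]; auto|]. split.
  - intros x Hx. split; [auto | split; [auto|]]. intros R Hr _ _. auto.
  - intros x y z [Hx [_ Hxy]] [_ [Hz Hyz]]. split; [auto | split; [auto|]].
    intros R Hr Ht Hb. apply (Ht x y z); [apply Hxy | apply Hyz]; auto.
Qed.

(* Cube steps inside an open set W lie in the preorder they generate (their
   endpoints lie in W because circulations are preorders on their open set). *)
Lemma cube_step_gen W : open S W -> forall a b, cube_step W a b -> gen_circ W a b.
Proof.
  intros HW a b Hab. pose proof Hab as [m [d [s1 [s2 [-> [-> Hs]]]]]].
  pose proof HC as [_ [Hio _]]. destruct (HP m) as [[_ [HCm _]] _].
  destruct (proj1 (HCm _ (proj1 (Hio m d) W HW)) s1 s2 Hs) as [H1 H2].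
  split; [exact H1 | split; [exact H2 |]]. intros R _ _ HR. exact (HR _ _ Hab).
Qed.

Lemma gen_circ_mono W W' : open S W -> open S W' -> (forall z, W z -> W' z) ->
  forall a b, gen_circ W a b -> gen_circ W' a b.
Proof.
  intros HW HW' Hsub a b [Ha [Hb Hab]].
  split; [auto | split; [auto|]]. intros R Hr Ht Hst.
  apply Hab; [intros z Hz; apply Hr; auto | exact Ht|].
  intros a' b' [m [d [s1 [s2 [-> [-> Hs]]]]]]. apply Hst. exists m, d, s1, s2.
  split; [auto | split; [auto|]].
  pose proof HC as [_ [Hio _]].
  apply (circ_mono (P m) (proj1 (HP m)) (fun z => W (iota m d z))); auto;
    apply (proj1 (Hio m d)); assumption.
Qed.

(* A cube step in a union of opens is a chain of cube steps in the members:
   this is the union property of the circulation of the cube. *)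
Lemma cube_step_union (O : (pt S -> Prop) -> Prop) (HO : forall V, O V -> open S V)
  (R : pt S -> pt S -> Prop) :
  (forall z, Union O z -> R z z) -> (forall a b c, R a b -> R b c -> R a c) ->
  (forall V a b, O V -> gen_circ V a b -> R a b) ->
  forall a b, cube_step (Union O) a b -> R a b.
Proof.
  intros HRr HRt HR a b [m [d [s1 [s2 [-> [-> Hs]]]]]].
  pose proof HC as [_ [Hio _]]. destruct (HP m) as [[_ HCm] _].
  set (O' := fun U : pt (P m) -> Prop => exists V, O V /\ U = (fun z => V (iota m d z))).
  assert (HO' : forall U, O' U -> open (P m) U)
    by (intros U [V [HV ->]]; apply (proj1 (Hio m d)), HO, HV).
  assert (E : (fun z => Union O (iota m d z)) = Union O').
  { apply pred_ext; intro z; split.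
    - intros [V [HV Hz]]. exists (fun z => V (iota m d z)); split; [exists V; auto | auto].
    - intros [U [[V [HV ->]] Hz]]. exists V; auto. }
  rewrite E in Hs.
  refine (circ_union_ind (P m) HCm O' HO' (fun s t => R (iota m d s) (iota m d t)) _ _ _ s1 s2 Hs).
  - intros z [U [[V [HV ->]] Hz]]. apply HRr. exists V; auto.
  - intros s t u; apply HRt.
  - intros U s t [V [HV ->]] Hst. apply (HR V _ _ HV).
    apply cube_step_gen; [apply HO; auto|]. exists m, d, s, t. auto.
Qed.

Definition generated : stream := {| pt := pt S; open := open S; circ := gen_circ |}.

Lemma generated_stream : is_stream generated.
Proof.
  split; [exact (proj1 (proj1 HC)) |]. split.
  - intros V _; exact (gen_circ_preorder V).
  - intros O HO x y. simpl in *. split.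
    + intros [_ [_ Hxy]] R [_ [HRr HRt]] HR.
      apply Hxy; [exact HRr | exact HRt |].
      exact (cube_step_union O HO R HRr HRt HR).
    + intro H. apply (H (gen_circ (Union O))); [exact (gen_circ_preorder _)|].
      intros V a b HV. apply gen_circ_mono; [apply HO; auto | |].
      * apply (proj1 (proj2 (proj1 (proj1 HC)))); auto.
      * intros z Hz; exists V; auto.
Qed.

(* The circulation of the coend is bounded by the cube-step preorder: the
   identity of S is a stream map to [generated], by the universal property. *)
Lemma circ_le_gen V : open S V -> forall a b, circ S V a b -> gen_circ V a b.
Proof.
  intros HV a b Hab.
  pose proof HC as [_ [Hio [Hcomp Hu]]].
  destruct (Hu generated generated_stream iota) as [[u [Hum Hu_eq]] _].
  - intros n c. split; [exact (proj1 (Hio n c))|].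
    intros W HW s t Hst. apply cube_step_gen; [exact HW|]. exists n, c, s, t. auto.
  - exact Hcomp.
  - assert (Hid : forall s, u s = s).
    { intro s. destruct (coend_surj s) as [n [c [t <-]]]. apply Hu_eq. }
    assert (E : (fun z => V (u z)) = V)
      by (apply functional_extensionality; intro; rewrite Hid; auto).
    pose proof (proj2 Hum V HV a b) as K. rewrite E, !Hid in K. exact (K Hab).
Qed.

Lemma gen_circ_strict (h : pt S -> R) W :
  (forall a b, cube_step W a b -> h a < h b \/ a = b) ->
  forall a b, gen_circ W a b -> h a < h b \/ a = b.
Proof.
  intros Hstep a b [_ [_ Hab]]. apply Hab; [auto | | exact Hstep].
  intros p q r [L | <-] [L' | <-]; [left; lra | left; auto | left; auto | right; auto].
Qed.

End Coend.

(** * Coordinate sums *)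

Definition sumF (m : nat) (F : nat -> R) : R := fold_right Rplus 0 (map F (seq 0 m)).

Lemma sumF_S m F : sumF (S m) F = F 0%nat + sumF m (fun j => F (S j)).
Proof. unfold sumF. simpl. f_equal. rewrite <- seq_shift, map_map. reflexivity. Qed.

Lemma sumF_ext m F G : (forall j, (j < m)%nat -> F j = G j) -> sumF m F = sumF m G.
Proof.
  revert F G; induction m as [|m IH]; intros F G H; [reflexivity|]. rewrite !sumF_S.
  f_equal; [apply H; lia | apply IH; intros; apply H; lia].
Qed.

Lemma sumF_zero m : sumF m (fun _ => 0) = 0.
Proof. induction m as [|m IH]; [reflexivity|]. rewrite sumF_S, IH. lra. Qed.

Lemma sumF_le_eq m F G : (forall j, (j < m)%nat -> F j <= G j) ->
  sumF m F <= sumF m G /\ (sumF m F = sumF m G -> forall j, (j < m)%nat -> F j = G j).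
Proof.
  revert F G; induction m as [|m IH]; intros F G H.
  - split; [unfold sumF; simpl; lra | intros; lia].
  - rewrite !sumF_S.
    destruct (IH (fun j => F (S j)) (fun j => G (S j))) as [H1 H2]; [intros; apply H; lia|].
    assert (H0 := H 0%nat ltac:(lia)).
    split; [lra|]. intros E j Hj. destruct j as [|j]; [lra|].
    apply (H2 ltac:(lra) j); lia.
Qed.

Lemma sumF_word (w : list (option bool)) (G : nat -> R) :
  sumF (length w) (fun j => match nth j w (Some false) with
                            | None => G (countId (firstn j w)) | Some _ => 0 end)
  = sumF (countId w) G.
Proof.
  revert G; induction w as [|a w IH]; intro G; [reflexivity|].
  simpl length. rewrite sumF_S.
  destruct a as [b|].
  - simpl. rewrite Rplus_0_l. apply IH.
  - simpl. rewrite sumF_S. f_equal. apply (IH (fun k => G (S k))).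
Qed.

Section Levels.

Context {P : nat -> stream} (proj : forall n, nat -> pt (P n) -> pt I1).

Definition coord_sum (F : R -> R) (m : nat) (t : pt (P m)) : R :=
  sumF m (fun j => F (proj1_sig (proj m j t))).

Lemma coord_sum_compat Pmap (HL : linear_maps P proj Pmap) (F : R -> R) :
  F 0 = 0 -> F 1 = 0 ->
  forall m n (f : cmor m n) (t : pt (P m)), coord_sum F n (Pmap m n f t) = coord_sum F m t.
Proof.
  intros F0 F1 m n f t. unfold coord_sum.
  transitivity (sumF n (fun j => match nth j (cword f) (Some false) with
      | None => F (proj1_sig (proj m (countId (firstn j (cword f))) t))
      | Some _ => 0 end)).
  - apply sumF_ext; intros j Hj. rewrite (HL m n f t j Hj).
    destruct (nth j (cword f) (Some false)) as [[|]|]; simpl; auto.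
  - pose proof (sumF_word (cword f) (fun k => F (proj1_sig (proj m k t)))) as Hw.
    rewrite (clen f), (cids f) in Hw. exact Hw.
Qed.

Definition unwrap (θ v : R) : R := if Rlt_dec θ v then v - 1 else v.
Definition height (θ : R) (m : nat) (t : pt (P m)) : R := coord_sum (unwrap θ) m t.

Definition hits (θ v : R) : R := if Req_EM_T v θ then 1 else 0.
Definition avoids (θ : R) (m : nat) (t : pt (P m)) : Prop := coord_sum (hits θ) m t = 0.

Lemma avoids_iff θ m t : avoids θ m t <-> forall j, (j < m)%nat -> proj1_sig (proj m j t) <> θ.
Proof.
  unfold avoids, coord_sum. split.
  - intros H j Hj Heq.
    destruct (sumF_le_eq m (fun _ => 0) (fun j => hits θ (proj1_sig (proj m j t)))) as [_ H2].
    { intros; unfold hits; destruct Req_EM_T; lra. }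
    specialize (H2 ltac:(rewrite sumF_zero, H; reflexivity) j Hj). unfold hits in H2.
    destruct (Req_EM_T _ θ); [lra | contradiction].
  - intro H. rewrite (sumF_ext m _ (fun _ => 0)).
    + apply sumF_zero.
    + intros j Hj. unfold hits. destruct (Req_EM_T _ θ); [exfalso; apply (H j Hj); auto | auto].
Qed.

(* Both level functions vanish on the vertices, hence are compatible with
   the face maps, as soon as the level lies strictly inside the interval. *)
Lemma avoids_compat Pmap (HL : linear_maps P proj Pmap) θ : 0 < θ < 1 ->
  forall m n (f : cmor m n) (t : pt (P m)), avoids θ n (Pmap m n f t) = avoids θ m t.
Proof.
  intros Hθ m n f t. unfold avoids.
  rewrite (coord_sum_compat Pmap HL); [reflexivity | |]; unfold hits; destruct Req_EM_T; lra.
Qed.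

Lemma height_compat Pmap (HL : linear_maps P proj Pmap) θ : 0 < θ < 1 ->
  forall m n (f : cmor m n) (t : pt (P m)), height θ n (Pmap m n f t) = height θ m t.
Proof.
  intros Hθ m n f t. unfold height.
  apply (coord_sum_compat Pmap HL); unfold unwrap; destruct Rlt_dec; lra.
Qed.

Hypothesis HP : is_cube_product P proj.

Lemma avoids_open θ m : open (P m) (avoids θ m).
Proof.
  destruct (HP m) as [[HT _] [Hpr _]].
  apply (open_ext (P m) (fun t => forall j, (j < m)%nat ->
           (fun z : I1pt => proj1_sig z <> θ) (proj m j t))).
  - intro t; rewrite avoids_iff; tauto.
  - apply open_fin; auto. intros j Hj. exact (proj1 (Hpr j Hj) _ (I1_open_neq θ)).
Qed.

Definition orthant (θ : R) (m : nat) (σ : nat -> bool) (t : pt (P m)) : Prop :=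
  forall j, (j < m)%nat ->
    if σ j then θ < proj1_sig (proj m j t) else proj1_sig (proj m j t) < θ.

Lemma orthant_open θ m σ : open (P m) (orthant θ m σ).
Proof.
  destruct (HP m) as [[HT _] [Hpr _]].
  apply open_fin; auto. intros j Hj.
  destruct (σ j); [exact (proj1 (Hpr j Hj) _ (I1_open_gt θ)) | exact (proj1 (Hpr j Hj) _ (I1_open_lt θ))].
Qed.

Lemma avoids_union θ m : avoids θ m = Union (fun U => exists σ, U = orthant θ m σ).
Proof.
  apply pred_ext; intro t; rewrite avoids_iff; split.
  - intro Ht. exists (orthant θ m (fun j => if Rlt_dec θ (proj1_sig (proj m j t)) then true else false)).
    split; [eexists; reflexivity|].
    intros j Hj. destruct (Rlt_dec θ _); [auto | specialize (Ht j Hj); lra].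
  - intros [V [[σ ->] HV]] j Hj. specialize (HV j Hj).
    destruct (σ j); lra.
Qed.

Lemma height_orthant θ m (a b : pt (P m)) :
  (forall j, (j < m)%nat -> proj1_sig (proj m j a) <= proj1_sig (proj m j b) /\
                            (θ < proj1_sig (proj m j a) <-> θ < proj1_sig (proj m j b))) ->
  height θ m a < height θ m b \/ a = b.
Proof.
  intro H.
  assert (Hj : forall j, (j < m)%nat ->
      unwrap θ (proj1_sig (proj m j a)) <= unwrap θ (proj1_sig (proj m j b)) /\
      (unwrap θ (proj1_sig (proj m j a)) = unwrap θ (proj1_sig (proj m j b)) ->
       proj1_sig (proj m j a) = proj1_sig (proj m j b))).
  { intros j Hjm. destruct (H j Hjm) as [Hle Hside]. unfold unwrap.
    destruct (Rlt_dec θ (proj1_sig (proj m j a))) as [Ha|Ha];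
      destruct (Rlt_dec θ (proj1_sig (proj m j b))) as [Hb|Hb];
      [| exfalso; apply Hb, Hside, Ha | exfalso; apply Ha, Hside, Hb |]; split; intros; lra. }
  destruct (sumF_le_eq m (fun j => unwrap θ (proj1_sig (proj m j a)))
                         (fun j => unwrap θ (proj1_sig (proj m j b)))) as [L1 L2].
  { intros j Hjm; apply Hj; auto. }
  unfold height, coord_sum. destruct (Rle_lt_or_eq_dec _ _ L1) as [Lt | Eq]; [left; exact Lt | right].
  apply (cube_ext HP). intros j Hjm. apply (proj2 (Hj j Hjm)). exact (L2 Eq j Hjm).
Qed.

(* Inside the region avoiding θ, directed steps of the cube raise the height,
   strictly unless they are trivial: the circulation of this union of
   orthants is generated by steps within single orthants. *)
Lemma height_step θ m (s1 s2 : pt (P m)) :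
  circ (P m) (avoids θ m) s1 s2 -> height θ m s1 < height θ m s2 \/ s1 = s2.
Proof.
  rewrite avoids_union. intro Hs.
  destruct (HP m) as [[_ HCm] _].
  refine (circ_union_ind (P m) HCm _ _ (fun a b => height θ m a < height θ m b \/ a = b)
            _ _ _ s1 s2 Hs).
  - intros V [σ ->]. apply orthant_open.
  - intros; right; reflexivity.
  - intros a b c [L|<-] [L'|<-]; [left; lra | left; auto | left; auto | right; auto].
  - intros V a b [σ ->] Hab. apply height_orthant. intros j Hj.
    destruct (proj1 (proj1 HCm _ (orthant_open θ m σ)) a b Hab) as [Ha Hb].
    specialize (Ha j Hj). specialize (Hb j Hj).
    split; [exact (cube_circ_le HP m _ a b (orthant_open θ m σ) Hab j Hj)|].
    destruct (σ j); split; intros; lra.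
Qed.

End Levels.

Lemma level_avoiding (L : list R) : exists θ, 0 < θ < 1 /\ forall v, In v L -> v <> θ.
Proof.
  cut (forall a b, a < b -> exists θ, a < θ < b /\ forall v, In v L -> v <> θ);
    [intro H; apply H; lra|].
  induction L as [|v L IH]; intros a b Hab.
  - exists ((a + b) / 2); split; [lra | intros v []].
  - destruct (Rlt_dec a v) as [H1|H1]; [destruct (Rlt_dec v b) as [H2|H2]|].
    + destruct (IH a v H1) as [θ [Hθ Hn]]. exists θ; split; [lra|].
      intros w [<- | Hw]; [lra | auto].
    + destruct (IH a b Hab) as [θ [Hθ Hn]]. exists θ; split; [lra|].
      intros w [<- | Hw]; [lra | auto].
    + destruct (IH a b Hab) as [θ [Hθ Hn]]. exists θ; split; [lra|].
      intros w [<- | Hw]; [lra | auto].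
Qed.

Theorem mainTheorem2
  (X : precubical)
  (P : nat -> stream) (proj : forall n, nat -> pt (P n) -> pt I1)
  (Pmap : forall m n, cmor m n -> pt (P m) -> pt (P n))
  (S : stream) (iota : forall n, cell X n -> pt (P n) -> pt S) :
  is_cube_product P proj ->
  linear_maps P proj Pmap ->
  is_coend X P Pmap S iota ->
  forall x : pt S, exists V : pt S -> Prop,
    open S V /\ V x /\ antisymmetric_on (circ S V).
Proof.
  intros HP HL HC x.
  destruct (coend_surj HP HC x) as [n [c [t0 <-]]].
  destruct (level_avoiding (map (fun j => proj1_sig (proj n j t0)) (seq 0 n))) as [θ [Hθ Hθt0]].
  destruct (coend_descend HP HC Prop (fun p => p) (fun m _ t => avoids proj θ m t))
    as [inV [HV HinV]].
  { intros m _. apply (avoids_open proj HP). }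
  { intros m k f d t. apply (avoids_compat proj Pmap HL θ Hθ). }
  destruct (coend_descend HP HC R (fun _ => False) (fun m _ t => height proj θ m t))
    as [h [_ Hh]].
  { intros m _. apply open_empty, (proj1 (HP m)). }
  { intros m k f d t. apply (height_compat proj Pmap HL θ Hθ). }
  exists inV. split; [exact HV|]. split.
  - rewrite HinV. apply avoids_iff. intros j Hj.
    apply Hθt0, (in_map (fun j => proj1_sig (proj n j t0))), in_seq. lia.
  - assert (Hmono : forall a b, circ S inV a b -> h a < h b \/ a = b).
    { intros a b Hab. refine (gen_circ_strict h inV _ a b (circ_le_gen HP HC inV HV a b Hab)).
      intros a' b' [m [d [s1 [s2 [-> [-> Hs]]]]]]. rewrite !Hh.
      destruct (height_step proj HP θ m s1 s2) as [L | ->]; [| left; auto | right; auto].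
      replace (avoids proj θ m) with (fun z => inV (iota m d z)); [exact Hs|].
      apply functional_extensionality; intro; apply HinV. }
    intros a b Hab Hba. destruct (Hmono a b Hab), (Hmono b a Hba); auto; lra.
Qed.
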